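(* Let $\lambda$ be a nonzero real number and $D=\frac{d}{dx}$. For every integer $n\ge 0$ and every $x$ with $|\lambda x|<1$, $$\mathrm{bel}_{n,\lambda}(x)\,e_{\lambda}(x)=(xD)^{n}e_{\lambda}(x)=\sum_{k=0}^{\infty}\frac{(1)_{k,\lambda}}{k!}k^{n}x^{k}.$$
   Context: For nonzero $\lambda\in\mathbb{R}$, $e_{\lambda}(t)=(1+\lambda t)^{1/\lambda}$, and $(1)_{0,\lambda}=1$, $(1)_{k,\lambda}=1(1-\lambda)\cdots(1-(k-1)\lambda)$ for $k\ge1$, so that $e_\lambda(x)=\sum_{k\ge0}(1)_{k,\lambda}\frac{x^k}{k!}$. The degenerate Bell polynomials of the second kind $\mathrm{bel}_{n,\lambda}(x)$ are defined by $e_{\lambda}(xe^{t})\cdot e_{\lambda}(x)^{-1}=\sum_{n=0}^{\infty}\mathrm{bel}_{n,\lambda}(x)\frac{t^{n}}{n!}$. Here $(xD)^n$ denotes the $n$-fold application of the operator $f\mapsto x f'(x)$. *)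

From Stdlib Require Import Reals.
From Coquelicot Require Import Coquelicot.
Open Scope R_scope.

(* degenerate exponential e_lambda(t) = (1 + lambda t)^(1/lambda)
   (real power, meaningful for 1 + lambda t > 0) *)
Definition e_lam (lam t : R) : R := Rpower (1 + lam * t) (1 / lam).

Fixpoint fall_one (lam : R) (k : nat) : R :=
  match k with
  | O => 1
  | S m => fall_one lam m * (1 - INR m * lam)
  end.

(* degenerate Bell polynomial of the second kind: n!-times the t^n coefficient
   of the exponential generating function e_lam(x e^t) / e_lam(x), i.e. its
   n-th derivative in t at t = 0 *)
Definition bel (n : nat) (lam x : R) : R :=
  Derive_n (fun t => e_lam lam (x * exp t) / e_lam lam x) n 0.

Fixpoint xD_pow (n : nat) (f : R -> R) : R -> R :=
  match n with
  | O => f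
  | S m => fun y => y * Derive (xD_pow m f) y
  end.

From Stdlib Require Import Reals Lra Lia Factorial.
From Coquelicot Require Import Coquelicot.
Open Scope R_scope.

(* For |lam y| < 1 the binomial series S(y) = sum_k (1)_(k,lam) y^k / k!
   converges, and both S and e_lam solve (1 + lam y) f' = f with f(0) = 1, so
   S = e_lam on that disk.  Applying xD termwise multiplies the k-th
   coefficient by k, which gives the series for (xD)^n e_lam.  Finally
   d/dt g(x e^t) = (xD g)(x e^t), so the n-th t-derivative at t = 0 of
   e_lam(x e^t) / e_lam(x), which is bel_(n,lam)(x), is (xD)^n e_lam(x) / e_lam(x). *)

Lemma CV_radius_le_abs (a b : nat -> R) :
  (forall k, Rabs (a k) <= Rabs (b k)) -> Rbar_le (CV_radius b) (CV_radius a).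
Proof.
  intros Hab.
  apply (proj2 (CV_radius_bounded b)).
  intros r [M HM]; apply (proj1 (CV_radius_bounded a)).
  exists M; intros k.
  eapply Rle_trans; [|apply (HM k)].
  rewrite !Rabs_mult; apply Rmult_le_compat_r; [apply Rabs_pos|apply Hab].
Qed.

Lemma open_CV_disk (a : nat -> R) : open (fun y => Rbar_lt (Rabs y) (CV_radius a)).
Proof.
  apply (open_comp Rabs (fun u => Rbar_lt u (CV_radius a))).
  - intros y _; apply continuous_Rabs.
  - apply open_Rbar_lt.
Qed.

Definition PS_weight (n : nat) (a : nat -> R) (k : nat) : R := INR k ^ n * a k.

Lemma PS_weight_S n a k :
  PS_weight (S n) a k = PS_incr_1 (PS_derive (PS_weight n a)) k.
Proof.
  unfold PS_weight, PS_derive; destruct k as [|k]; simpl.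
  - change (@zero R_NormedModule) with 0; ring.
  - ring.
Qed.

Lemma CV_radius_weight n a : CV_radius (PS_weight n a) = CV_radius a.
Proof.
  induction n as [|n IH].
  - apply CV_radius_ext; intros k; unfold PS_weight; simpl; ring.
  - rewrite (CV_radius_ext _ _ (PS_weight_S n a)), CV_radius_incr_1,
      CV_radius_derive; exact IH.
Qed.

Lemma xD_pow_ext_open (U : R -> Prop) (f g : R -> R) n :
  open U -> (forall y, U y -> f y = g y) ->
  forall y, U y -> xD_pow n f y = xD_pow n g y.
Proof.
  intros HU Hfg; induction n as [|n IH]; intros y Hy; [now apply Hfg|].
  simpl; f_equal; apply Derive_ext_loc, (locally_open U); assumption.
Qed.

Lemma xD_pow_PSeries n a y : Rbar_lt (Rabs y) (CV_radius a) ->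
  xD_pow n (PSeries a) y = PSeries (PS_weight n a) y.
Proof.
  revert y; induction n as [|n IH]; intros y Hy.
  - apply PSeries_ext; intros k; unfold PS_weight; simpl; ring.
  - simpl.
    rewrite (Derive_ext_loc _ (PSeries (PS_weight n a))).
    + rewrite Derive_PSeries by now rewrite CV_radius_weight.
      rewrite <- PSeries_incr_1; apply PSeries_ext; intros k.
      symmetry; apply PS_weight_S.
    + apply (locally_open _ _ (open_CV_disk a)); assumption.
Qed.

Lemma Derive_n_comp_mul_exp (g : R -> R) (U : R -> Prop) (x : R) :
  open U -> (forall m y, U y -> ex_derive (xD_pow m g) y) ->
  forall n t, U (x * exp t) ->
  Derive_n (fun s => g (x * exp s)) n t = xD_pow n g (x * exp t).
Proof.
  intros HU Hder n; induction n as [|n IH]; intros t Ht; [reflexivity|].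
  assert (HUt : open (fun s => U (x * exp s))).
  { apply (open_comp (fun s => x * exp s)); [|exact HU].
    intros s _.
    apply (ex_derive_continuous (V := R_NormedModule) (fun s => x * exp s)).
    auto_derive; exact I. }
  simpl; rewrite (Derive_ext_loc _ (fun s => xD_pow n g (x * exp s))).
  - apply is_derive_unique.
    replace (x * exp t * Derive (xD_pow n g) (x * exp t))
      with (scal (x * exp t) (Derive (xD_pow n g) (x * exp t))) by reflexivity.
    apply (is_derive_comp (xD_pow n g) (fun s => x * exp s)).
    + apply Derive_correct, Hder, Ht.
    + auto_derive; [exact I|ring].
  - apply (locally_open _ _ HUt); assumption.
Qed.

Lemma eq_of_same_linear_ode (f g q : R -> R) (y : R) :
  (forall z, Rabs z <= Rabs y ->
     is_derive f z (q z * f z) /\ is_derive g z (q z * g z) /\ g z <> 0) ->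
  f 0 = g 0 -> f y = g y.
Proof.
  intros Hode H0.
  set (h := fun z => f z / g z).
  assert (Hh : forall z, Rmin 0 y <= z <= Rmax 0 y -> is_derive h z 0).
  { intros z Hz.
    assert (Hzy : Rabs z <= Rabs y).
    { revert Hz; unfold Rmin, Rmax, Rabs.
      destruct (Rle_dec 0 y), (Rcase_abs z), (Rcase_abs y); lra. }
    destruct (Hode z Hzy) as (Hf & Hg & Hgz).
    replace 0 with ((q z * f z * g z - f z * (q z * g z)) / (g z) ^ 2)
      by (field; exact Hgz).
    apply is_derive_div; assumption. }
  destruct (MVT_gen h 0 y (fun _ => 0)) as (c & _ & Hc).
  - intros z Hz; apply Hh; lra.
  - intros z Hz; apply continuity_pt_filterlim.
    apply (ex_derive_continuous (V := R_NormedModule) h).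
    eexists; apply Hh, Hz.
  - assert (Hg0 : g 0 <> 0) by (apply Hode; rewrite Rabs_R0; apply Rabs_pos).
    assert (Hgy : g y <> 0) by (apply Hode, Rle_refl).
    unfold h in Hc; rewrite H0, Rmult_0_l in Hc.
    replace (g 0 / g 0) with 1 in Hc by (field; exact Hg0).
    apply (Rmult_eq_reg_r (/ g y)); [|now apply Rinv_neq_0_compat].
    rewrite Rinv_r by exact Hgy; unfold Rdiv in Hc; lra.
Qed.

Definition binom_coef (lam : R) (k : nat) : R := fall_one lam k / INR (fact k).

Lemma INR_fact_pos k : 0 < INR (fact k).
Proof. apply lt_0_INR, lt_O_fact. Qed.

Lemma binom_coef_0 lam : binom_coef lam 0 = 1.
Proof. unfold binom_coef; simpl; field. Qed.

Lemma binom_coef_S lam k :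
  binom_coef lam (S k) = binom_coef lam k * (1 - INR k * lam) / INR (S k).
Proof.
  unfold binom_coef; simpl fall_one.
  change (fact (S k)) with (S k * fact k)%nat; rewrite mult_INR.
  pose proof (INR_fact_pos k); pose proof (lt_0_INR (S k) (Nat.lt_0_succ k)).
  field; lra.
Qed.

Lemma binom_coef_pos L k : 0 <= L -> 0 < binom_coef (- L) k.
Proof.
  intros HL; induction k as [|k IH].
  - rewrite binom_coef_0; lra.
  - rewrite binom_coef_S; pose proof (pos_INR k).
    apply Rdiv_lt_0_compat; [|apply lt_0_INR; lia].
    apply Rmult_lt_0_compat; nra.
Qed.

Lemma Rabs_binom_coef_le lam k :
  Rabs (binom_coef lam k) <= binom_coef (- Rabs lam) k.
Proof.
  induction k as [|k IH].
  - rewrite !binom_coef_0, Rabs_R1; lra.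
  - rewrite !binom_coef_S; unfold Rdiv.
    rewrite !Rabs_mult, (Rabs_right (/ _))
      by (apply Rle_ge, Rlt_le, Rinv_0_lt_compat, lt_0_INR; lia).
    apply Rmult_le_compat_r; [apply Rlt_le, Rinv_0_lt_compat, lt_0_INR; lia|].
    apply Rmult_le_compat; try apply Rabs_pos; [exact IH|].
    pose proof (pos_INR k); pose proof (Rabs_pos lam).
    eapply Rle_trans; [apply Rabs_triang|].
    rewrite Rabs_R1, Rabs_Ropp, Rabs_mult, (Rabs_right (INR k)) by lra; lra.
Qed.

Lemma is_lim_seq_binom_ratio L :
  is_lim_seq (fun k => (1 + INR k * L) / INR (S k)) L.
Proof.
  apply is_lim_seq_ext with (fun k => L + (1 - L) * / INR (S k)).
  { intros k; rewrite S_INR; pose proof (pos_INR k); field; lra. }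
  replace (Finite L) with (Rbar_plus L (Rbar_mult (1 - L) 0))
    by (simpl; f_equal; ring).
  apply is_lim_seq_plus'; [apply is_lim_seq_const|].
  replace (Finite ((1 - L) * 0)) with (Rbar_mult (1 - L) 0) by reflexivity.
  apply is_lim_seq_scal_l.
  replace (Finite 0) with (Rbar_inv p_infty) by reflexivity.
  apply is_lim_seq_inv; [|discriminate].
  apply (is_lim_seq_incr_1 INR), is_lim_seq_INR.
Qed.

(* The coefficients of [(1 - |lam| y)^(-1/|lam|)] dominate ours and have
   ratio tending to [|lam|]. *)
Lemma CV_radius_binom_coef lam : lam <> 0 ->
  Rbar_le (/ Rabs lam) (CV_radius (binom_coef lam)).
Proof.
  intros Hlam; set (L := Rabs lam).
  assert (HL : 0 < L) by now apply Rabs_pos_lt.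
  rewrite <- (CV_radius_finite_DAlembert (binom_coef (- L)) L).
  - apply CV_radius_le_abs; intros k.
    rewrite (Rabs_right (binom_coef (- L) k));
      [apply Rabs_binom_coef_le|apply Rle_ge, Rlt_le, binom_coef_pos; lra].
  - intros k; apply Rgt_not_eq, binom_coef_pos; lra.
  - exact HL.
  - apply is_lim_seq_ext with (fun k => (1 + INR k * L) / INR (S k));
      [|apply is_lim_seq_binom_ratio].
    intros k.
    pose proof (binom_coef_pos L k (Rlt_le _ _ HL)).
    pose proof (pos_INR k); pose proof (lt_0_INR (S k) (Nat.lt_0_succ k)).
    assert (Hratio : binom_coef (- L) (S k) / binom_coef (- L) k
                     = (1 + INR k * L) / INR (S k))
      by (rewrite binom_coef_S; field; lra).
    rewrite Hratio, Rabs_right; [reflexivity|].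
    apply Rle_ge, Rdiv_le_0_compat; nra.
Qed.

Lemma Rabs_lt_CV_radius_binom lam y : lam <> 0 -> Rabs (lam * y) < 1 ->
  Rbar_lt (Rabs y) (CV_radius (binom_coef lam)).
Proof.
  intros Hlam Hy.
  assert (HL : 0 < Rabs lam) by now apply Rabs_pos_lt.
  eapply Rbar_lt_le_trans; [|apply CV_radius_binom_coef, Hlam].
  simpl; rewrite Rabs_mult in Hy.
  apply (Rmult_lt_reg_l (Rabs lam)); [exact HL|].
  rewrite Rinv_r by lra; exact Hy.
Qed.

Lemma PS_derive_binom_coef lam k :
  PS_derive (binom_coef lam) k
  = binom_coef lam k - lam * PS_weight 1 (binom_coef lam) k.
Proof.
  unfold PS_derive, PS_weight; rewrite binom_coef_S.
  pose proof (lt_0_INR (S k) (Nat.lt_0_succ k)); rewrite pow_1; field; lra.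
Qed.

(* Termwise, [(k+1) a_(k+1) = a_k - lam k a_k], i.e. [S' = S - lam y S']. *)
Lemma is_derive_binom_series lam y : lam <> 0 -> Rabs (lam * y) < 1 ->
  is_derive (PSeries (binom_coef lam)) y
    (/ (1 + lam * y) * PSeries (binom_coef lam) y).
Proof.
  intros Hlam Hy.
  set (a := binom_coef lam).
  assert (Hr : Rbar_lt (Rabs y) (CV_radius a))
    by now apply Rabs_lt_CV_radius_binom.
  assert (Hxd : y * PSeries (PS_derive a) y = PSeries (PS_weight 1 a) y).
  { rewrite <- (xD_pow_PSeries 1 a y Hr); simpl.
    rewrite Derive_PSeries by exact Hr; reflexivity. }
  assert (Hode : PSeries (PS_derive a) y
                 = PSeries a y - lam * (y * PSeries (PS_derive a) y)).
  { rewrite Hxd, <- PSeries_scal, <- PSeries_minus.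
    - apply PSeries_ext; intros k; apply PS_derive_binom_coef.
    - now apply CV_radius_inside.
    - apply ex_pseries_scal; [apply Rmult_comm|].
      apply CV_radius_inside; now rewrite CV_radius_weight. }
  assert (Hpos : 0 < 1 + lam * y) by (apply Rabs_def2 in Hy; lra).
  replace (/ (1 + lam * y) * PSeries a y) with (PSeries (PS_derive a) y).
  2:{ apply (Rmult_eq_reg_l (1 + lam * y)); [|lra].
      rewrite <- Rmult_assoc, Rinv_r, Rmult_1_l by lra. lra. }
  now apply is_derive_PSeries.
Qed.

Lemma is_derive_e_lam lam y : lam <> 0 -> 0 < 1 + lam * y ->
  is_derive (e_lam lam) y (/ (1 + lam * y) * e_lam lam y).
Proof.
  intros Hlam Hy; unfold e_lam, Rpower.
  auto_derive; [exact Hy|field; lra].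
Qed.

Lemma e_lam_pos lam y : 0 < e_lam lam y.
Proof. apply exp_pos. Qed.

Lemma binomial_series_e_lam lam y : lam <> 0 -> Rabs (lam * y) < 1 ->
  PSeries (binom_coef lam) y = e_lam lam y.
Proof.
  intros Hlam Hy.
  apply (eq_of_same_linear_ode _ _ (fun z => / (1 + lam * z))).
  - intros z Hz.
    assert (Hlz : Rabs (lam * z) < 1).
    { rewrite Rabs_mult in *; pose proof (Rabs_pos lam); nra. }
    assert (Hpos : 0 < 1 + lam * z) by (apply Rabs_def2 in Hlz; lra).
    split; [|split].
    + now apply is_derive_binom_series.
    + now apply is_derive_e_lam.
    + apply Rgt_not_eq, e_lam_pos.
  - rewrite PSeries_0, binom_coef_0; unfold e_lam, Rpower.
    rewrite Rmult_0_r, Rplus_0_r, ln_1, Rmult_0_r, exp_0; reflexivity.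
Qed.

Lemma open_binom_disk lam : open (fun y => Rabs (lam * y) < 1).
Proof.
  apply (open_comp (fun y => Rabs (lam * y)) (fun u => u < 1)); [|apply open_lt].
  intros y _; apply continuous_Rabs_comp.
  apply (ex_derive_continuous (V := R_NormedModule) (fun y => lam * y)).
  auto_derive; exact I.
Qed.

Lemma xD_pow_e_lam lam n y : lam <> 0 -> Rabs (lam * y) < 1 ->
  xD_pow n (e_lam lam) y = PSeries (PS_weight n (binom_coef lam)) y.
Proof.
  intros Hlam Hy.
  rewrite (xD_pow_ext_open _ (e_lam lam) (PSeries (binom_coef lam)) n
             (open_binom_disk lam)).
  - apply xD_pow_PSeries; now apply Rabs_lt_CV_radius_binom.
  - intros z Hz; symmetry; now apply binomial_series_e_lam.
  - exact Hy.
Qed.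

Lemma ex_derive_xD_pow_e_lam lam m y : lam <> 0 -> Rabs (lam * y) < 1 ->
  ex_derive (xD_pow m (e_lam lam)) y.
Proof.
  intros Hlam Hy.
  apply (ex_derive_ext_loc (PSeries (PS_weight m (binom_coef lam)))).
  - apply (locally_open _ _ (open_binom_disk lam)); [|exact Hy].
    intros z Hz; symmetry; now apply xD_pow_e_lam.
  - apply ex_derive_PSeries; rewrite CV_radius_weight.
    now apply Rabs_lt_CV_radius_binom.
Qed.

Lemma bel_mul_e_lam lam n x : lam <> 0 -> Rabs (lam * x) < 1 ->
  bel n lam x * e_lam lam x = xD_pow n (e_lam lam) x.
Proof.
  intros Hlam Hx; unfold bel.
  rewrite (Derive_n_ext _ (fun t => / e_lam lam x * e_lam lam (x * exp t)))
    by (intros; apply Rmult_comm).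
  rewrite Derive_n_scal_l,
    (Derive_n_comp_mul_exp _ _ x (open_binom_disk lam)).
  - rewrite exp_0, Rmult_1_r; field; apply Rgt_not_eq, e_lam_pos.
  - intros m y Hy; now apply ex_derive_xD_pow_e_lam.
  - now rewrite exp_0, Rmult_1_r.
Qed.

Theorem theorem5 (lam : R) (n : nat) (x : R) :
  lam <> 0 -> Rabs (lam * x) < 1 ->
  bel n lam x * e_lam lam x = xD_pow n (e_lam lam) x /\
  is_series (fun k => fall_one lam k / INR (Factorial.fact k) * INR k ^ n * x ^ k)
            (xD_pow n (e_lam lam) x).
Proof.
  intros Hlam Hx; split; [now apply bel_mul_e_lam|].
  rewrite (xD_pow_e_lam lam n x Hlam Hx).
  apply is_series_ext with (fun k => PS_weight n (binom_coef lam) k * x ^ k).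
  { intros k; unfold PS_weight; now rewrite (Rmult_comm (INR k ^ n)). }
  apply is_pseries_R, PSeries_correct, CV_radius_inside.
  rewrite CV_radius_weight; now apply Rabs_lt_CV_radius_binom.
Qed.
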